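(* Let $K=K_0\supset K_1\supset K_2\supset\cdots$ be a module with a decreasing filtration by submodules (with the convention $K_q=K_0$ for $q<0$), and for each integer $r\ge -1$ let $\partial_r:K\to K$ be a linear map with $\partial_r(K_p)\subset K_p$ for all $p$, $\partial_{-1}=0$, and $\partial_r\circ\partial_s=0$ for all $r,s\ge -1$. For $r\ge -1$ and integers $p$ put $Z^r_p=\{x\in K_p:\ \partial_r x\in K_{p+r}\}$. Assume the following property: for all $r\ge 0$ and all $p$, if $x\in Z^r_p$ or $x\in Z^{r-1}_p$, then $\partial_r x-\partial_{r-1}x\in Z^{r-1}_{p+r}$. Then $Z^{r-1}_{p+1}\subset Z^r_p$ for all $r\ge 0$ and all $p\ge 0$.
   Context: The maps $\partial_r$ play the role of varying boundary operators converging in the filtration topology. *)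

From HB Require Import structures.
From mathcomp Require Import all_boot all_order all_algebra.
Set Implicit Arguments. Unset Strict Implicit. Unset Printing Implicit Defensive.
Import Order.TTheory GRing.Theory Num.Theory.
Local Open Scope ring_scope.

Definition Zset (V : Type) (F : int -> {pred V}) (d : int -> V -> V)
  (r p : int) (x : V) : Prop :=
  x \in F p /\ d r x \in F (p + r).

From HB Require Import structures.
From mathcomp Require Import all_boot all_order all_algebra.
Import Order.TTheory GRing.Theory Num.Theory.
Local Open Scope ring_scope.

(* Write d_r x = (d_r x - d_(r-1) x) + d_(r-1) x.  For x in Z^(r-1)_(p+1) the
   hypothesis, applied at level p+1, puts the first summand in K_(p+r+1),
   hence in K_(p+r), and the second summand lies in K_(p+r) by assumption. *)

Lemma zmod_closed_subK (V : zmodType) (S : {pred V}) :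
  zmod_closed S -> forall u v, u - v \in S -> v \in S -> u \in S.
Proof. by move=> /GRing.zmod_closedD [_ SD] u v Suv Sv; rewrite -(subrK v u) SD. Qed.

Section FiltrationInclusion.

Variables (V : zmodType) (F : int -> {pred V}) (d : int -> V -> V).

Hypothesis F_zmod : forall p : int, zmod_closed (F p).
Hypothesis F_decr : forall (p : int) (x : V), x \in F (p + 1) -> x \in F p.
Hypothesis dB_Zset : forall (r p : int) (x : V), 0 <= r ->
  Zset F d r p x \/ Zset F d (r - 1) p x ->
  Zset F d (r - 1) (p + r) (d r x - d (r - 1) x).

Lemma Zset_pred_succ_sub (r p : int) (x : V) : 0 <= r ->
  Zset F d (r - 1) (p + 1) x -> Zset F d r p x.
Proof.
move=> r_ge0 Zx; have [Fx dFx] := Zx.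
split; first exact: F_decr.
have [Fdiff _] := dB_Zset r (p + 1) x r_ge0 (or_intror Zx).
have Fdiff' : d r x - d (r - 1) x \in F (p + r).
  by apply: F_decr; rewrite addrAC.
have dFx' : d (r - 1) x \in F (p + r).
  by move: dFx; rewrite addrACA subrr addr0.
exact: zmod_closed_subK (F_zmod _) _ _ Fdiff' dFx'.
Qed.

End FiltrationInclusion.

Theorem mainTheorem2 (R : pzRingType) (V : lmodType R)
  (F : int -> {pred V}) (d : int -> {linear V -> V})
  (F_submod : forall p : int, submod_closed (F p))
  (F_decr : forall (p : int) (x : V), x \in F (p + 1) -> x \in F p)
  (F_top : forall (p : int) (x : V), p <= 0 -> x \in F p)
  (d_filt : forall (r p : int) (x : V), -1 <= r -> x \in F p -> d r x \in F p)
  (d_m1 : forall x : V, d (-1) x = 0)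
  (d_sq : forall (r s : int) (x : V), -1 <= r -> -1 <= s -> d r (d s x) = 0)
  (hyp : forall (r p : int) (x : V), 0 <= r ->
     Zset F d r p x \/ Zset F d (r - 1) p x ->
     Zset F d (r - 1) (p + r) (d r x - d (r - 1) x)) :
  forall (r p : int) (x : V), 0 <= r -> 0 <= p ->
    Zset F d (r - 1) (p + 1) x -> Zset F d r p x.
Proof.
(* The inclusion holds for every p. *)
move=> r p x r_ge0 _.
have F_zmod p : zmod_closed (F p) := GRing.submod_closedB (F_submod p).
exact: Zset_pred_succ_sub F_zmod F_decr hyp r p x r_ge0.
Qed.
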